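(* Let $\phi:\mathbb{N}\to\mathbb{N}$ be any function. For any instance oracle $f$ with $\max\{|f(G,v)|: G \text{ an } n\text{-node graph}, v\in G\}=o(n\phi(n))$ and any deterministic exploration algorithm $A$, there exist a constant $c>0$ and infinitely many $n$ such that for each of them there are an $n$-node graph $G$ and a starting node $v$ for which the agent executing $A$ with input $f(G,v)$ from $v$ does not explore $G$ within fewer than $c\, n^2/2^{\phi(n)}$ edge traversals. That is, exploration takes time $\Omega(n^2/2^{\phi(n)})$ on some $n$-node graph, for arbitrarily large $n$.
   Context: Model: a graph is a simple connected undirected graph with $n$ nodes. Nodes are unlabeled; at each node of degree $d$ the incident edges carry distinct port numbers $0,\dots,d-1$, arbitrarily assigned. A mobile agent starts at some node. At each step, located at a node $u$ whose degree it knows, it chooses a port at $u$ and traverses the corresponding edge to a neighbor $w$; upon arrival it learns the port number of this edge at $w$ and the degree of $w$. The agent must visit all nodes and stop; the time of exploration is the number of edge traversals. A deterministic exploration algorithm receives as input a binary string (advice); its size is its length. An instance oracle is a function assigning a binary string $f(G,v)$ to each pair $(G,v)$ where $G$ is a port-numbered graph and $v$ is the starting node of the agent in $G$. *)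

From HB Require Import structures.
From mathcomp Require Import all_boot all_order all_algebra.
Set Implicit Arguments. Unset Strict Implicit. Unset Printing Implicit Defensive.
Import Order.TTheory GRing.Theory Num.Theory.

(* A port-numbered graph on n nodes (nodes are 'I_n; the labels are invisible
   to the agent).  [deg u] is the degree of u; for a port p < deg u,
   [nbr u p] is the neighbour reached through port p and [bport u p] is the
   port number of that edge at the neighbour.  Values for p >= deg u are
   irrelevant. *)
Record PGraph (n : nat) := PG {
  deg   : 'I_n -> nat;
  nbr   : 'I_n -> nat -> 'I_n;
  bport : 'I_n -> nat -> nat
}.

Definition adj n (G : PGraph n) : rel 'I_n :=
  fun u w => has (fun p => nbr G u p == w) (iota 0 (deg G u)).

Definition is_pgraph n (G : PGraph n) : Prop :=
  (* edges are undirected: port maps form an involution *)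
  (forall u p, p < deg G u ->
     [/\ bport G u p < deg G (nbr G u p),
         nbr G (nbr G u p) (bport G u p) = u &
         bport G (nbr G u p) (bport G u p) = p])
  /\ (forall u p, p < deg G u -> nbr G u p <> u)
  /\ (forall u p q, p < deg G u -> q < deg G u -> nbr G u p = nbr G u q -> p = q)
  /\ (forall u w, connect (adj G) u w).

Definition Oracle := forall n, PGraph n -> 'I_n -> seq bool.

(* A deterministic exploration algorithm: given the advice, the degree of
   the start node, and the history of observations so far (for each
   traversal: the port of the edge at the arrival node and the degree of the
   arrival node), it either chooses a port (Some p) or stops (None). *)
Definition Algo := seq bool -> nat -> seq (nat * nat) -> option nat.

Fixpoint walk n (G : PGraph n) (A : Algo) (adv : seq bool) (v : 'I_n) (k : nat)
  : option ('I_n * seq (nat * nat)) :=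
  match k with
  | 0 => Some (v, [::])
  | k'.+1 =>
    match walk G A adv v k' with
    | Some (u, h) =>
      match A adv (deg G v) h with
      | Some p =>
        if p < deg G u then
          Some (nbr G u p, rcons h (bport G u p, deg G (nbr G u p)))
        else None
      | None => None
      end
    | None => None
    end
  end.

Definition explores_in n (G : PGraph n) (A : Algo) (adv : seq bool) (v : 'I_n)
  (k : nat) : Prop :=
  (exists u h, walk G A adv v k = Some (u, h) /\ A adv (deg G v) h = None)
  /\ (forall w : 'I_n, exists i, i <= k /\ exists h, walk G A adv v i = Some (w, h)).

From HB Require Import structures.
From mathcomp Require Import all_boot all_order all_algebra.
From mathcomp Require Import zify.
From Stdlib Require Import Classical.
Import Order.TTheory GRing.Theory Num.Theory.
Set Implicit Arguments. Unset Strict Implicit. Unset Printing Implicit Defensive.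

(* For m >= 2, an injective s : 'I_m -> 'I_m * 'I_m selects m edges
   of K_{m,m}; subdividing them gives a 3m-node graph G_s.  Started outside the
   subdivision nodes, the agent in G_s sees exactly what it would see in G_s'
   as long as s and s' agree on the subdivision nodes met so far, and entering
   subdivision node j reveals s j.  So s is determined by the advice and the m
   first-visit times of the subdivision nodes.  If every G_s were explored
   within B steps with L advice bits, the (m^2)^_m injections would be encoded
   by at most (L + 1) 2^L (B + 1)^m codes, which is false for L = m phi / 2 and
   B = m^2 / 2^(phi + 3). *)

Section SubdividedBipartite.

Variable m : nat.
Implicit Types (s : {ffun 'I_m -> 'I_m * 'I_m}) (j : 'I_m).

Definition pair_val (x : 'I_m * 'I_m) : nat * nat := (val x.1, val x.2).

Lemma pair_val_inj : injective pair_val.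
Proof. by move=> [x1 x2] [y1 y2] [/val_inj -> /val_inj ->]. Qed.

Lemma pair_val_lt x : (pair_val x).1 < m /\ (pair_val x).2 < m.
Proof. by split; apply: ltn_ord. Qed.

Definition subdivider s (a b : nat) : option 'I_m := [pick j | pair_val (s j) == (a, b)].

Definition endpoints s (i : nat) : nat * nat :=
  if insub i is Some j then pair_val (s j) else (0, 0).

Lemma subdividerP s a b j : subdivider s a b = Some j -> pair_val (s j) = (a, b).
Proof. by rewrite /subdivider; case: pickP => [j' /eqP ? [<-] | _]. Qed.

Lemma subdivider_pair_val s a b j :
  injective s -> pair_val (s j) = (a, b) -> subdivider s a b = Some j.
Proof.
move=> s_inj sj; rewrite /subdivider; case: pickP => [j' /eqP sj'|/(_ j)]; last by rewrite sj eqxx.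
by congr Some; apply/s_inj/pair_val_inj; rewrite sj sj'.
Qed.

Lemma subdivider_eq s s' a b : injective s -> injective s' ->
  (forall j, subdivider s a b = Some j \/ subdivider s' a b = Some j -> s j = s' j) ->
  subdivider s a b = subdivider s' a b.
Proof.
move=> s_inj s'_inj agree; case E: (subdivider s a b) => [j|].
  have sj := subdividerP E; rewrite agree ?E in sj; last by left.
  by rewrite (subdivider_pair_val s'_inj sj).
case E': (subdivider s' a b) => [j|] //.
have sj := subdividerP E'; rewrite -agree ?E' in sj; last by right.
by rewrite (subdivider_pair_val s_inj sj) in E.
Qed.

Lemma endpointsE s j : endpoints s j = pair_val (s j).
Proof. by rewrite /endpoints valK. Qed.

(* Nodes [0, m) and [m, 2m) are the two sides of K_{m,m}: port p of the left
   node a leads to m + p, port p of the right node m + b leads to p.  The edge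
   {a, m + b} with pair_val (s j) = (a, b) is subdivided by the node 2m + j,
   whose port 0 leads to a and port 1 to m + b. *)
Definition sdeg (u : nat) : nat := if u < 2 * m then m else 2.

Definition snbr s (u p : nat) : nat :=
  if u < m then (if subdivider s u p is Some j then 2 * m + j else m + p)
  else if u < 2 * m then (if subdivider s p (u - m) is Some j then 2 * m + j else p)
  else if p == 0 then (endpoints s (u - 2 * m)).1 else m + (endpoints s (u - 2 * m)).2.

Definition sbport s (u p : nat) : nat :=
  if u < m then (if subdivider s u p is Some _ then 0 else u)
  else if u < 2 * m then (if subdivider s p (u - m) is Some _ then 1 else u - m)
  else if p == 0 then (endpoints s (u - 2 * m)).2 else (endpoints s (u - 2 * m)).1.

Lemma sdegLR u : u < 2 * m -> sdeg u = m.
Proof. by rewrite /sdeg => ->. Qed.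

Lemma sdegZ j : sdeg (2 * m + j) = 2.
Proof. by rewrite /sdeg ltnNge leq_addr. Qed.

Lemma snbrL s a p : a < m ->
  snbr s a p = if subdivider s a p is Some j then 2 * m + j else m + p.
Proof. by rewrite /snbr => ->. Qed.

Lemma sbportL s a p : a < m -> sbport s a p = if subdivider s a p is Some _ then 0 else a.
Proof. by rewrite /sbport => ->. Qed.

Lemma snbrR s b p : b < m ->
  snbr s (m + b) p = if subdivider s p b is Some j then 2 * m + j else p.
Proof.
by move=> lt_b; rewrite /snbr ltnNge leq_addr /= addKn (_ : m + b < 2 * m) //; lia.
Qed.

Lemma sbportR s b p : b < m -> sbport s (m + b) p = if subdivider s p b is Some _ then 1 else b.
Proof.
by move=> lt_b; rewrite /sbport ltnNge leq_addr /= addKn (_ : m + b < 2 * m) //; lia.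
Qed.

Lemma snbrZ s j p :
  snbr s (2 * m + j) p = if p == 0 then (pair_val (s j)).1 else m + (pair_val (s j)).2.
Proof.
by rewrite /snbr (_ : 2 * m + j < m = false) ?ltnNge ?leq_addr ?addKn ?endpointsE //; lia.
Qed.

Lemma sbportZ s j p :
  sbport s (2 * m + j) p = if p == 0 then (pair_val (s j)).2 else (pair_val (s j)).1.
Proof.
by rewrite /sbport (_ : 2 * m + j < m = false) ?ltnNge ?leq_addr ?addKn ?endpointsE //; lia.
Qed.

Lemma node_cases u : u < 3 * m ->
  [\/ u < m, exists2 b, b < m & u = m + b | exists j, u = 2 * m + j].
Proof.
move=> lt_u; case: (ltnP u m) => [lt_um|le_m_u]; first by apply: Or31.
case: (ltnP u (2 * m)) => [lt_u2|le_u2]; [apply: Or32; exists (u - m) => //; lia|].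
apply: Or33; have lt_j : u - 2 * m < m by lia.
by exists (Ordinal lt_j) => /=; lia.
Qed.

Variable s : {ffun 'I_m -> 'I_m * 'I_m}.
Hypothesis s_inj : injective s.

Lemma snbr_lt u p : u < 3 * m -> p < sdeg u -> snbr s u p < 3 * m.
Proof.
case/node_cases=> [lt_a|[b lt_b ->]|[j ->]].
- rewrite sdegLR ?snbrL //; last lia.
  by case: subdivider => [j|] lt_p; [have := ltn_ord j|]; lia.
- rewrite sdegLR ?snbrR //; last lia.
  by case: subdivider => [j|] lt_p; [have := ltn_ord j|]; lia.
- by rewrite snbrZ; have [] := pair_val_lt (s j); case: (p =P 0); lia.
Qed.

Lemma snbr_neq u p : u < 3 * m -> p < sdeg u -> snbr s u p != u.
Proof.
case/node_cases=> [lt_a|[b lt_b ->]|[j ->]].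
- rewrite sdegLR ?snbrL //; last lia.
  by case: subdivider => [j|] lt_p; [have := ltn_ord j|]; lia.
- rewrite sdegLR ?snbrR //; last lia.
  by case: subdivider => [j|] lt_p; [have := ltn_ord j|]; lia.
- by rewrite snbrZ; have [] := pair_val_lt (s j); case: (p =P 0); lia.
Qed.

Lemma snbr_inj u p q : u < 3 * m -> p < sdeg u -> q < sdeg u ->
  snbr s u p = snbr s u q -> p = q.
Proof.
case/node_cases=> [lt_a|[b lt_b ->]|[j ->]].
- rewrite sdegLR ?snbrL //; last lia.
  case Ep: subdivider => [jp|]; case Eq: subdivider => [jq|] lt_p lt_q; try lia.
  move=> /addnI/val_inj ejq; move: Ep Eq; rewrite ejq.
  by move=> /subdividerP Ep /subdividerP; rewrite Ep => -[].
- rewrite sdegLR ?snbrR //; last lia.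
  case Ep: subdivider => [jp|]; case Eq: subdivider => [jq|] lt_p lt_q; try lia.
  move=> /addnI/val_inj ejq; move: Ep Eq; rewrite ejq.
  by move=> /subdividerP Ep /subdividerP; rewrite Ep => -[].
- by rewrite sdegZ !snbrZ; have [] := pair_val_lt (s j); case: (p =P 0); case: (q =P 0); lia.
Qed.

Lemma snbr_involutive u p : u < 3 * m -> p < sdeg u ->
  [/\ sbport s u p < sdeg (snbr s u p), snbr s (snbr s u p) (sbport s u p) = u
    & sbport s (snbr s u p) (sbport s u p) = p].
Proof.
case/node_cases=> [lt_a|[b lt_b ->]|[j ->]].
- rewrite sdegLR; last lia.
  move=> lt_p; rewrite (snbrL _ _ lt_a) (sbportL _ _ lt_a).
  case E: subdivider => [j|].
    by rewrite sdegZ snbrZ sbportZ (subdividerP E).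
  by rewrite sdegLR ?snbrR ?sbportR ?E //; lia.
- rewrite sdegLR; last lia.
  move=> lt_p; rewrite (snbrR _ _ lt_b) (sbportR _ _ lt_b).
  case E: subdivider => [j|].
    by rewrite sdegZ snbrZ sbportZ (subdividerP E).
  by rewrite sdegLR ?snbrL ?sbportL ?E //; lia.
- rewrite sdegZ snbrZ sbportZ; case E: (pair_val (s j)) => [a b] lt_p.
  have [] := pair_val_lt (s j); rewrite E /= => lt_a lt_b.
  have sub_ab := subdivider_pair_val s_inj E.
  case: (p =P 0) => [->|p_neq0].
    by rewrite sdegLR ?snbrL ?sbportL ?sub_ab //; lia.
  by rewrite sdegLR ?snbrR ?sbportR ?sub_ab //=; [split=> //; lia | lia].
Qed.

Variable s' : {ffun 'I_m -> 'I_m * 'I_m}.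
Hypothesis s'_inj : injective s'.

Lemma snbr_entry u p j : u < 3 * m -> p < sdeg u ->
  snbr s u p = 2 * m + j -> snbr s' u p = 2 * m + j -> s j = s' j.
Proof.
case/node_cases=> [lt_a|[b lt_b ->]|[i ->]].
- rewrite sdegLR ?snbrL //; last lia; move=> lt_p.
  case E: (subdivider s) => [k|]; last lia; case E': (subdivider s') => [k'|]; last lia.
  move=> /addnI/val_inj ekj /addnI/val_inj ek'j; move: E E'; rewrite ekj ek'j.
  by move=> /subdividerP sj /subdividerP; rewrite -sj => /pair_val_inj.
- rewrite sdegLR ?snbrR //; last lia; move=> lt_p.
  case E: (subdivider s) => [k|]; last lia; case E': (subdivider s') => [k'|]; last lia.
  move=> /addnI/val_inj ekj /addnI/val_inj ek'j; move: E E'; rewrite ekj ek'j.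
  by move=> /subdividerP sj /subdividerP; rewrite -sj => /pair_val_inj.
- by rewrite snbrZ; have [] := pair_val_lt (s i); case: (p =P 0); lia.
Qed.

Lemma snbr_sbport_agree u p : u < 3 * m -> p < sdeg u ->
  (forall j, [\/ u = 2 * m + j, snbr s u p = 2 * m + j | snbr s' u p = 2 * m + j] ->
     s j = s' j) ->
  snbr s u p = snbr s' u p /\ sbport s u p = sbport s' u p.
Proof.
case/node_cases=> [lt_a|[b lt_b ->]|[j ->]] _ agree.
- rewrite !snbrL // !sbportL // (@subdivider_eq s s') // => j [] E; apply: agree.
    by apply: Or32; rewrite snbrL // E.
  by apply: Or33; rewrite snbrL // E.
- rewrite !snbrR // !sbportR // (@subdivider_eq s s') // => j [] E; apply: agree.
    by apply: Or32; rewrite snbrR // E.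
  by apply: Or33; rewrite snbrR // E.
- by rewrite !snbrZ !sbportZ agree //; apply: Or31.
Qed.

End SubdividedBipartite.

Definition ports_involutive n (G : PGraph n) : Prop :=
  forall u p, p < deg G u ->
  [/\ bport G u p < deg G (nbr G u p), nbr G (nbr G u p) (bport G u p) = u
    & bport G (nbr G u p) (bport G u p) = p].

Lemma adj_sym n (G : PGraph n) : ports_involutive G -> symmetric (adj G).
Proof.
suff adjC u w : ports_involutive G -> adj G u w -> adj G w u.
  by move=> invG u w; apply/idP/idP; apply: adjC.
move=> invG /hasP[p]; rewrite mem_iota /= => lt_p /eqP <-.
have [lt_q back_u _] := invG u p lt_p.
by apply/hasP; exists (bport G u p); rewrite ?mem_iota ?back_u.
Qed.

Section SubdivisionGraph.

Variable m : nat.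

Definition subdiv_graph (s : {ffun 'I_m -> 'I_m * 'I_m}) : PGraph (3 * m) :=
  PG (fun u => sdeg m u) (fun u p => insubd u (snbr s u p)) (fun u p => sbport s u p).

Lemma lnode_subproof (a : 'I_m) : a < 3 * m. Proof. by have := ltn_ord a; lia. Qed.
Lemma rnode_subproof (b : 'I_m) : m + b < 3 * m. Proof. by have := ltn_ord b; lia. Qed.
Lemma znode_subproof (j : 'I_m) : 2 * m + j < 3 * m. Proof. by have := ltn_ord j; lia. Qed.

Definition lnode a : 'I_(3 * m) := Ordinal (lnode_subproof a).
Definition rnode b : 'I_(3 * m) := Ordinal (rnode_subproof b).
Definition znode j : 'I_(3 * m) := Ordinal (znode_subproof j).

Lemma subdiv_node_cases (u : 'I_(3 * m)) :
  [\/ exists a, u = lnode a, exists b, u = rnode b | exists j, u = znode j].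
Proof.
case/node_cases: (ltn_ord u) => [lt_u|[b lt_b eq_u]|[j eq_u]].
- by apply: Or31; exists (Ordinal lt_u); apply: val_inj.
- by apply: Or32; exists (Ordinal lt_b); apply: val_inj.
- by apply: Or33; exists j; apply: val_inj.
Qed.

Variable s : {ffun 'I_m -> 'I_m * 'I_m}.
Hypothesis s_inj : injective s.
Local Notation G := (subdiv_graph s).

Lemma subdiv_nbrE (u : 'I_(3 * m)) p : p < sdeg m u -> val (nbr G u p) = snbr s u p.
Proof. by move=> lt_p; rewrite val_insubd snbr_lt. Qed.

Lemma subdiv_adj (u w : 'I_(3 * m)) p : p < sdeg m u -> val w = snbr s u p -> adj G u w.
Proof.
move=> lt_p eq_w; apply/hasP; exists p; first by rewrite mem_iota.
by apply/eqP/val_inj; rewrite subdiv_nbrE.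
Qed.

Lemma subdiv_ports_involutive : ports_involutive G.
Proof.
move=> u p /= lt_p.
have nbrE : val (insubd u (snbr s u p) : 'I_(3 * m)) = snbr s u p := subdiv_nbrE lt_p.
have [lt_q back_u back_p] := snbr_involutive s_inj (ltn_ord u) lt_p.
by rewrite nbrE; split=> //; apply: val_inj; rewrite val_insubd nbrE back_u ltn_ord.
Qed.

Lemma connect_lnode_rnode a b : connect (adj G) (lnode a) (rnode b).
Proof.
have lt_a2 : a < 2 * m by have := ltn_ord a; lia.
case E: (subdivider s a b) => [j|].
  apply: (@connect_trans _ _ (znode j)); apply: connect1.
    by apply: (@subdiv_adj _ _ b); rewrite /= ?snbrL ?E ?sdegLR.
  by apply: (@subdiv_adj _ _ 1); rewrite /= ?sdegZ ?snbrZ ?(subdividerP E).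
by apply/connect1/(@subdiv_adj _ _ b); rewrite /= ?snbrL ?E ?sdegLR.
Qed.

Lemma subdiv_connected u w : connect (adj G) u w.
Proof.
have a0 : 'I_m by case: m u => [[]|m' _]; [|exact: ord0].
have symG := sym_connect_sym (adj_sym subdiv_ports_involutive).
have left_hub a : connect (adj G) (lnode a) (lnode a0).
  by apply: connect_trans (connect_lnode_rnode a a0) _; rewrite symG connect_lnode_rnode.
suff to_hub x : connect (adj G) x (lnode a0).
  by apply: connect_trans (to_hub u) _; rewrite symG.
case: (subdiv_node_cases x) => [[a ->] | [b ->] | [j ->]] //.
  by rewrite symG; apply: connect_trans (left_hub a0) (connect_lnode_rnode a0 b).
apply: connect_trans (left_hub (s j).1); apply/connect1/(@subdiv_adj _ _ 0).
  by rewrite /= sdegZ.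
by rewrite /= snbrZ.
Qed.

Lemma subdiv_graph_pgraph : is_pgraph G.
Proof.
split; [exact: subdiv_ports_involutive | split; [|split]]; last exact: subdiv_connected.
- move=> u p /= lt_p eq_u.
  by move: (snbr_neq s (ltn_ord u) lt_p); rewrite -(subdiv_nbrE lt_p) /= eq_u eqxx.
- move=> u p q /= lt_p lt_q eq_pq; apply: (snbr_inj (s := s) (ltn_ord u) lt_p lt_q).
  by rewrite -(subdiv_nbrE lt_p) -(subdiv_nbrE lt_q) /= eq_pq.
Qed.

End SubdivisionGraph.

Section FirstVisits.

Variables (n : nat) (G : PGraph n) (A : Algo) (adv : seq bool) (v : 'I_n).

Lemma walk_stopped k u h : walk G A adv v k = Some (u, h) -> A adv (deg G v) h = None ->
  forall t, k < t -> walk G A adv v t = None.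
Proof.
move=> walk_k stop; elim=> // t IH; rewrite ltnS leq_eqVlt => /predU1P[<- | lt_kt] /=.
  by rewrite walk_k /= stop.
by rewrite IH.
Qed.

Lemma explores_in_gt0 k (w : 'I_n) : w != v -> explores_in G A adv v k -> 0 < k.
Proof.
move=> w_neq_v [_ visits_all]; rewrite lt0n; apply: contra w_neq_v => /eqP k0.
by have [i [+ [h]]] := visits_all w; rewrite k0 leqn0 => /eqP -> [->].
Qed.

Definition visits (w : 'I_n) t : bool :=
  if walk G A adv v t is Some (u, _) then u == w else false.

Definition explores_within B : Prop := exists2 k, k <= B & explores_in G A adv v k.

Definition first_visit B w : nat := find (visits w) (iota 0 B.+1).

Lemma first_visitP B w : explores_within B ->
  [/\ first_visit B w <= B, visits w (first_visit B w)
    & forall t, visits w t -> first_visit B w <= t].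
Proof.
move=> [k le_kB [[u [h [walk_k stop]]] visits_all]].
have [i [le_ik [h' walk_i]]] := visits_all w.
have has_visit : has (visits w) (iota 0 B.+1).
  by apply/hasP; exists i; rewrite ?mem_iota /visits ?walk_i //; lia.
have lt_first : first_visit B w < B.+1 by rewrite -[B.+1](size_iota 0) -has_find.
have := nth_find 0 has_visit; rewrite nth_iota // add0n => visit_first.
split=> // t visit_t; rewrite leqNgt; apply/negP => lt_t.
have [le_tB|lt_Bt] := leqP t B.
  by have := before_find 0 lt_t; rewrite nth_iota ?add0n ?visit_t //; lia.
by move: visit_t; rewrite /visits (walk_stopped walk_k stop) //; lia.
Qed.

End FirstVisits.

Section Reconstruction.

Variables (m : nat) (A : Algo) (adv : seq bool) (v : 'I_(3 * m)) (B : nat).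
Hypothesis v_not_subdivider : v < 2 * m.
Variables s s' : {ffun 'I_m -> 'I_m * 'I_m}.
Hypotheses (s_inj : injective s) (s'_inj : injective s').
Local Notation G := (subdiv_graph s).
Local Notation G' := (subdiv_graph s').
Hypotheses (explG : explores_within G A adv v B) (explG' : explores_within G' A adv v B).
Local Notation tau j := (first_visit G A adv v B (znode j)).
Hypothesis same_first_visits :
  forall j, first_visit G A adv v B (znode j) = first_visit G' A adv v B (znode j).

(* Since v is no subdivision node, znode j is entered through an edge at time
   tau j, and the port taken there determines s j. *)
Lemma subdivision_at_first_visit j :
  (forall t, t < tau j -> walk G A adv v t = walk G' A adv v t) -> s j = s' j.
Proof.
have [_ visit _] := first_visitP (znode j) explG.
have [_ + _] := first_visitP (znode j) explG'; rewrite -same_first_visits.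
move: (tau j) visit => [|t] visit visit' agree.
  by move: visit; rewrite /visits /= => /eqP/(congr1 val) /=; lia.
move: visit visit'; rewrite /visits /= agree //.
case: walk => [[u h]|] //; case: (A adv _ h) => [p|] //; case: ifP => // lt_p.
move=> /eqP/(congr1 val) /= + /eqP/(congr1 val) /=; rewrite !val_insubd !snbr_lt //.
exact: snbr_entry (ltn_ord u) lt_p.
Qed.

Lemma subdiv_walks_agree t : walk G A adv v t = walk G' A adv v t.
Proof.
elim/ltn_ind: t => [[|t] IH] //=; rewrite -IH //.
case walk_t: (walk G A adv v t) => [[u h]|] //; case EA: (A adv _ h) => [p|] //.
case: ifP => // lt_p.
(* The move from u only involves subdivision nodes first visited by time t.+1. *)
have visit_next s0 (j : 'I_m) : walk (subdiv_graph s0) A adv v t = Some (u, h) ->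
    snbr s0 u p = 2 * m + j -> visits (subdiv_graph s0) A adv v (znode j) t.+1.
  move=> walk0_t e; rewrite /visits /= walk0_t /= EA lt_p.
  by apply/eqP; apply: val_inj; rewrite /= val_insubd snbr_lt.
have agree (j : 'I_m) : [\/ val u = 2 * m + j, snbr s u p = 2 * m + j | snbr s' u p = 2 * m + j] ->
    s j = s' j.
  move=> near_j; apply: subdivision_at_first_visit => t' lt_t'; rewrite IH //.
  suff : tau j <= t.+1 by lia.
  have [_ _ first_min] := first_visitP (znode j) explG.
  have [_ _ first_min'] := first_visitP (znode j) explG'.
  case: near_j => e.
  - by apply/leqW/first_min; rewrite /visits walk_t; apply/eqP; apply: val_inj; exact: e.
  - by apply/first_min/visit_next.
  - by rewrite same_first_visits; apply/first_min'/visit_next; rewrite // -IH.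
by have [-> ->] := snbr_sbport_agree s_inj s'_inj (ltn_ord u) lt_p agree.
Qed.

Lemma subdivision_of_first_visits : s = s'.
Proof.
apply/ffunP=> j; apply: subdivision_at_first_visit => t _.
exact: subdiv_walks_agree.
Qed.

End Reconstruction.

Definition bits_code L (a : seq bool) : 'I_L.+1 * L.-tuple bool :=
  (inord (size a), [tuple nth false a i | i < L]).

Lemma bits_code_inj L a a' : size a <= L -> size a' <= L ->
  bits_code L a = bits_code L a' -> a = a'.
Proof.
move=> le_aL le_a'L eq_code.
have := congr1 (fun c => val c.1) eq_code; rewrite /= !inordK ?ltnS // => eq_size.
apply: (eq_from_nth (x0 := false)) => // i lt_i.
have lt_iL : i < L by apply: leq_trans le_aL.
by have := congr1 (fun c => tnth c.2 (Ordinal lt_iL)) eq_code; rewrite /= !tnth_mktuple.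
Qed.

Lemma expn_subn_leq_ffact n k : (n - k) ^ k <= n ^_ k.
Proof.
elim: k n => [|k IH] n //; rewrite ffactnS expnS.
apply: leq_mul; first exact: leq_subr.
by have := IH n.-1; rewrite -subn1 -subnDA add1n.
Qed.

Lemma injections_outnumber_codes m P L B : 2 <= m -> L * 2 <= m * P ->
  0 < B -> B * (8 * 2 ^ P) <= m * m -> L.+1 * 2 ^ L * B.+1 ^ m < (m * m) ^_ m.
Proof.
move=> m_ge2 le_L B_gt0 le_B; set X := 2 ^ P * B.+1.
have le_X : 4 * X <= m * m by rewrite /X; move: (2 ^ P) le_B => Y; nia.
have codes_le : L.+1 * 2 ^ L * B.+1 ^ m <= X ^ m.
  rewrite expnMn -expnM; apply: leq_mul => //.
  apply: (@leq_trans (2 ^ L * 2 ^ L)); first by apply: leq_mul => //; apply: ltn_expl.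
  by rewrite -expnD leq_exp2l //; lia.
apply: leq_ltn_trans codes_le (leq_trans _ (expn_subn_leq_ffact _ _)).
rewrite ltn_exp2r; last lia.
have : 2 * m <= m * m by rewrite mulnC leq_mul2l m_ge2 orbT.
have : 0 < X by rewrite muln_gt0 expn_gt0.
lia.
Qed.

Lemma exists_slow_subdivision m (A : Algo) (adv : {ffun 'I_m -> 'I_m * 'I_m} -> seq bool)
    (v : 'I_(3 * m)) (L B : nat) :
  v < 2 * m -> (forall s : {ffun 'I_m -> 'I_m * 'I_m}, injective s -> size (adv s) <= L) ->
  L.+1 * 2 ^ L * B.+1 ^ m < (m * m) ^_ m ->
  exists2 s : {ffun 'I_m -> 'I_m * 'I_m}, injective s &
    ~ explores_within (subdiv_graph s) A (adv s) v B.
Proof.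
move=> v_lt adv_small codes_lt; apply: NNPP => no_slow.
have fast (s : {ffun 'I_m -> 'I_m * 'I_m}) :
    injective s -> explores_within (subdiv_graph s) A (adv s) v B.
  by move=> s_inj; apply: NNPP => slow; apply: no_slow; exists s.
pose visit_time s j : 'I_B.+1 := inord (first_visit (subdiv_graph s) A (adv s) v B (znode j)).
pose code s := (bits_code L (adv s), [ffun j => visit_time s j]).
have visit_timeE (s : {ffun 'I_m -> 'I_m * 'I_m}) j : injective s ->
    visit_time s j = first_visit (subdiv_graph s) A (adv s) v B (znode j) :> nat.
  move=> s_inj; rewrite /visit_time inordK // ltnS.
  by case: (first_visitP (znode j) (fast s s_inj)).
have code_inj : {in [set s : {ffun 'I_m -> 'I_m * 'I_m} | injectiveb s] &, injective code}.
  move=> s s'; rewrite !inE => /injectiveP s_inj /injectiveP s'_inj same_code.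
  have eq_adv := bits_code_inj (adv_small _ s_inj) (adv_small _ s'_inj) (congr1 fst same_code).
  apply: (subdivision_of_first_visits v_lt s_inj s'_inj (fast s s_inj)).
    by rewrite eq_adv; apply: fast.
  move=> j; move/ffunP/(_ j)/(congr1 (@nat_of_ord _)): (congr1 snd same_code).
  by rewrite /= !ffunE !visit_timeE // eq_adv.
have := @leq_card_in _ _ code _ code_inj.
rewrite card_inj_ffuns !card_prod !card_ord card_tuple card_bool card_ffun !card_ord.
by rewrite leqNgt codes_lt.
Qed.

Lemma exists_slow_subdivision_graph m P (A : Algo)
    (adv : {ffun 'I_m -> 'I_m * 'I_m} -> seq bool) (v : 'I_(3 * m)) :
  2 <= m -> v < 2 * m ->
  (forall s : {ffun 'I_m -> 'I_m * 'I_m}, injective s -> size (adv s) * 2 <= m * P) ->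
  exists2 s : {ffun 'I_m -> 'I_m * 'I_m}, injective s &
    forall k, explores_in (subdiv_graph s) A (adv s) v k -> m * m < k * (8 * 2 ^ P).
Proof.
move=> m_ge2 v_lt adv_small; set B := m * m %/ (8 * 2 ^ P).
suff [s s_inj slow] : exists2 s : {ffun 'I_m -> 'I_m * 'I_m}, injective s &
    forall k, explores_in (subdiv_graph s) A (adv s) v k -> B < k.
  by exists s => // k /slow; rewrite ltn_divLR // muln_gt0 expn_gt0.
have [B0|B_gt0] := posnP B.
  exists [ffun j => (j, j)] => [j j' | k]; first by rewrite !ffunE => -[].
  have znode_neq_v : znode (Ordinal (ltnW m_ge2)) != v by rewrite -val_eqE /=; lia.
  by rewrite B0; apply: explores_in_gt0 znode_neq_v.
have [||s s_inj not_within] := @exists_slow_subdivision m A adv v (m * P %/ 2) B v_lt.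
- by move=> s s_inj; rewrite leq_divRL // adv_small.
- by apply: (@injections_outnumber_codes m P) => //; apply: leq_divM.
- by exists s => // k explG; rewrite ltnNge; apply/negP => le_kB; apply: not_within; exists k.
Qed.

Local Open Scope ring_scope.

Theorem mainTheorem8 (phi : nat -> nat) (f : Oracle)
  (hf : forall eps : rat, 0 < eps -> exists N : nat, forall n : nat, (N <= n)%N ->
          forall (G : PGraph n) (v : 'I_n), is_pgraph G ->
            (size (f n G v))%:R <= eps * (n * phi n)%N%:R)
  (A : Algo) :
  exists2 c : rat, 0 < c &
    forall N : nat, exists n : nat, (N <= n)%N /\
      exists (G : PGraph n) (v : 'I_n), is_pgraph G /\
        forall k : nat, explores_in G A (f n G v) v k ->
          c * (n ^ 2)%N%:R <= (k * 2 ^ phi n)%N%:R.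
Proof.
have [N0 short_advice] := hf 6%:R^-1 ltac:(by rewrite invr_gt0 ltr0n).
exists 72%:R^-1; first by rewrite invr_gt0 ltr0n.
move=> N; pose m := maxn (maxn N N0) 2; pose P := phi (3 * m)%N.
have m_ge2 : (2 <= m)%N by rewrite /m; lia.
pose v := lnode (Ordinal (ltnW m_ge2)).
have v_lt : (v < 2 * m)%N by rewrite /=; lia.
have [|s s_inj slow] := @exists_slow_subdivision_graph m P A
  (fun s => f (3 * m)%N (subdiv_graph s) v) v m_ge2 v_lt.
  move=> s s_inj; have := short_advice _ _ (subdiv_graph s) v (subdiv_graph_pgraph s_inj).
  rewrite mulrC ler_pdivlMr ?ltr0n // -natrM ler_nat.
  by move=> /(_ ltac:(rewrite /m; lia)); rewrite /P; lia.
exists (3 * m)%N; split; first by rewrite /m; lia.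
exists (subdiv_graph s), v; split; first exact: subdiv_graph_pgraph.
move=> k /slow lt_mm; rewrite mulrC ler_pdivrMr; last by rewrite ltr0n.
by rewrite -!natrM ler_nat expnMn -/P -mulnn; lia.
Qed.
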